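(* For every $n\ge 6$, $\mathrm{ex}_3(n;\{P,C,P^3_2\cup K^3_3\}\mid M)=2n-4$. That is, every $n$-vertex 3-graph containing two disjoint edges and containing no copy of $P$, of $C$, or of $P^3_2\cup K^3_3$ has at most $2n-4$ edges, and this bound is attained.
   Context: All hypergraphs are 3-uniform; containment means containing an isomorphic copy. $P$ is the loose 3-uniform path of length 3: vertices $a,b,c,d,e,f,g$, edges $\{a,b,c\},\{c,d,e\},\{e,f,g\}$. $C$ is the loose triangle: vertices $x_1,x_2,x_3,y_1,y_2,y_3$, edges $\{x_1,y_3,x_2\},\{x_2,y_1,x_3\},\{x_3,y_2,x_1\}$. $M$ consists of two disjoint edges. $P^3_2$ is two edges sharing exactly one vertex; $K^3_3$ is a single edge; $P^3_2\cup K^3_3$ is their vertex-disjoint union (8 vertices, 3 edges). $\mathrm{ex}_3(n;\mathcal F\mid\mathcal G)$ is the maximum number of edges of an $n$-vertex 3-graph containing no member of $\mathcal F$ and containing some member of $\mathcal G$. *)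

From HB Require Import structures.
From mathcomp Require Import all_boot.
Set Implicit Arguments. Unset Strict Implicit. Unset Printing Implicit Defensive.

Definition hgraph (n : nat) := {set {set 'I_n}}.

Definition uniform3 (n : nat) (H : hgraph n) : Prop :=
  forall e, e \in H -> #|e| = 3.

Definition contains (n k : nat) (H : hgraph n) (F : hgraph k) : Prop :=
  exists f : 'I_k -> 'I_n, injective f /\ forall e, e \in F -> f @: e \in H.

Definition tri (k : nat) (a b c : nat) : {set 'I_k.+1} :=
  [set inord a; inord b; inord c].

(* Loose path of length 3: a..g = 0..6, edges abc, cde, efg. *)
Definition Ppath : hgraph 7 := [set tri 6 0 1 2; tri 6 2 3 4; tri 6 4 5 6].

(* Loose triangle: x1,x2,x3,y1,y2,y3 = 0,1,2,3,4,5;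
   edges {x1,y3,x2},{x2,y1,x3},{x3,y2,x1}. *)
Definition Ctri : hgraph 6 := [set tri 5 0 5 1; tri 5 1 3 2; tri 5 2 4 0].

Definition Mmatch : hgraph 6 := [set tri 5 0 1 2; tri 5 3 4 5].

Definition P2K3 : hgraph 8 := [set tri 7 0 1 2; tri 7 2 3 4; tri 7 5 6 7].

Definition admissible (n : nat) (H : hgraph n) : Prop :=
  [/\ uniform3 H, contains H Mmatch, ~ contains H Ppath,
      ~ contains H Ctri & ~ contains H P2K3].

From mathcomp Require Import all_boot zify.
Set Implicit Arguments. Unset Strict Implicit. Unset Printing Implicit Defensive.

(* Fix two disjoint edges A and B.  Forbidding P and P^3_2 u K^3_3 forces every edge
   to meet A or B in at least two vertices, or to miss both.  Two edges meeting A in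
   two vertices cannot share exactly one vertex (together with B they would span P, C
   or P^3_2 u K^3_3), so these edges pairwise share two vertices: they form a
   sunflower with a two-vertex kernel or lie inside four vertices, and there are at
   most n - 2 of them; likewise for B.  If some edge misses both A and B, then no two
   edges share exactly one vertex at all, and then every intersection-component has
   at most as many edges as vertices, so |H| <= n.
   Extremality: take all triples containing {u, w} and all triples containing
   {u', w'}, for disjoint pairs.  Among three edges two contain the same pair, whereas
   P, C and P^3_2 u K^3_3 each have three edges pairwise sharing at most one vertex. *)

Section Traces.
Variable T : finType.
Implicit Types A B S X Y Z e f g h : {set T}.

Lemma subset_of_card_setI A B : #|A| <= #|A :&: B| -> A \subset B.
Proof. by move=> AB; apply/setIidPl/eqP; rewrite eqEcard subsetIl. Qed.

Lemma subsetU_of_traces h X Y :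
  #|h| + #|h :&: (X :&: Y)| <= #|h :&: X| + #|h :&: Y| -> h \subset X :|: Y.
Proof.
move=> hXY; apply: subset_of_card_setI.
by rewrite setIUr cardsU setIACA setIid; lia.
Qed.

Lemma card3_setI_le2 e f : #|e| = 3 -> #|f| = 3 -> e != f -> #|e :&: f| <= 2.
Proof.
move=> e3 f3 nef; rewrite leqNgt; apply: contra nef => ef.
have ef_sub : e \subset f by apply: subset_of_card_setI; rewrite e3.
by rewrite eqEcard ef_sub e3 f3.
Qed.

Lemma cardsI_disjoint2 S X Y : X :&: Y = set0 -> #|S :&: X| + #|S :&: Y| <= #|S|.
Proof.
move=> XY; have : (S :&: X) :|: (S :&: Y) \subset S by rewrite subUset !subsetIl.
by move/subset_leq_card; rewrite cardsU setIACA setIid XY setI0 cards0 subn0.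
Qed.

Lemma cardsI_disjoint3 S X Y Z : X :&: Y = set0 -> X :&: Z = set0 -> Y :&: Z = set0 ->
  #|S :&: X| + #|S :&: Y| + #|S :&: Z| <= #|S|.
Proof.
move=> XY XZ YZ; have := cardsI_disjoint2 S (Y := Y :|: Z) (X := X).
rewrite setIUr XY XZ setU0 => /(_ erefl); rewrite setIUr cardsU setIACA setIid YZ.
by rewrite setI0 cards0 subn0 addnA.
Qed.

Lemma setI_gt0_of_traces e f g : #|e| < #|f :&: e| + #|g :&: e| -> 0 < #|f :&: g|.
Proof.
move=> big; have : (f :&: e) :|: (g :&: e) \subset e by rewrite subUset !subsetIr.
move/subset_leq_card; rewrite cardsU.
have : #|f :&: e :&: (g :&: e)| <= #|f :&: g|.
  by apply/subset_leq_card/subsetP => x; rewrite !inE => /andP [/andP [-> _] /andP [-> _]].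
lia.
Qed.

End Traces.

Section PairwiseMeetTwo.
Variables (T : finType) (F : {set {set T}}).
Implicit Types e f g h p : {set T}.
Hypothesis F3 : {in F, forall e, #|e| = 3}.
Hypothesis F_meet2 : {in F &, forall e f, e != f -> 2 <= #|e :&: f|}.

Lemma sunflower_card p : #|p| = 2 -> {in F, forall e, p \subset e} -> F != set0 ->
  #|F| + 2 <= #|cover F|.
Proof.
move=> p2 pF /set0Pn [e0 e0F].
have p_cover : p \subset cover F := subset_trans (pF _ e0F) (bigcup_sup e0 e0F).
have petal_inj : {in F &, injective (fun e => e :\: p)}.
  move=> e f eF fF /= ef.
  by rewrite -(setID e p) -(setID f p) ef (setIidPr (pF _ eF)) (setIidPr (pF _ fF)).
have petals : [set e :\: p | e in F] \subset [set [set t] | t in cover F :\: p].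
  apply/subsetP => _ /imsetP [e eF ->].
  have /cards1P [t et] : #|e :\: p| == 1 by rewrite cardsDS ?pF // F3 ?p2.
  by rewrite et imset_f // (subsetP (setSD p (bigcup_sup e eF))) // et set11.
have := subset_leq_card petals; rewrite (card_in_imset petal_inj).
have := leq_imset_card (fun t : T => [set t]) (cover F :\: p).
rewrite cardsDS // p2; have := subset_leq_card p_cover; rewrite p2; lia.
Qed.

Lemma subsetU_of_core_avoided e f g : e \in F -> f \in F -> g \in F -> e != f ->
  ~~ (e :&: f \subset g) -> {in F, forall h, h \subset e :|: f}.
Proof.
move=> eF fF gF ef core_g.
have core2 : #|e :&: f| = 2.
  by have := F_meet2 eF fF ef; have := card3_setI_le2 (F3 eF) (F3 fF) ef; lia.
have core_trace h : ~~ (e :&: f \subset h) -> #|h :&: (e :&: f)| <= 1.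
  move=> core_h; rewrite leqNgt; apply: contra core_h => big.
  by apply: subset_of_card_setI; rewrite core2 setIC.
have off_core h : h \in F -> ~~ (e :&: f \subset h) -> h \subset e :|: f.
  move=> hF core_h; apply: subsetU_of_traces.
  have he : h != e by apply: contraNneq core_h => ->; exact: subsetIl.
  have hf : h != f by apply: contraNneq core_h => ->; exact: subsetIr.
  have := F_meet2 hF eF he; have := F_meet2 hF fF hf; have := core_trace h core_h.
  rewrite (F3 hF); lia.
move=> h hF; have [core_h | ] := boolP (e :&: f \subset h); last exact: off_core.
apply: subset_trans (_ : (e :&: f) :|: g \subset _); last first.
  by rewrite subUset (off_core g) // (subset_trans (subsetIl e f) (subsetUl e f)).
apply: subsetU_of_traces; rewrite (setIidPr core_h) (F3 hF) core2.
have hg : h != g by apply: contraNneq core_g => <-.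
have : #|h :&: (e :&: f :&: g)| <= #|g :&: (e :&: f)|.
  by apply/subset_leq_card/subsetP => x; rewrite !inE => /andP [_ /andP [-> ->]].
have := F_meet2 hF gF hg; have := core_trace g core_g; lia.
Qed.

Lemma meet2_family_card : #|F| + 2 <= #|cover F| \/ #|F| <= 4 /\ #|F| <= #|cover F|.
Proof.
have [-> | [e eF]] := set_0Vmem F; first by right; rewrite cards0.
have e_cover : 3 <= #|cover F| by rewrite -(F3 eF) subset_leq_card ?bigcup_sup.
have [F_e | /subsetPn [f fF]] := boolP (F \subset [set e]).
  by right; have := subset_leq_card F_e; rewrite cards1; lia.
rewrite inE eq_sym => ef.
have core2 : #|e :&: f| = 2.
  by have := F_meet2 eF fF ef; have := card3_setI_le2 (F3 eF) (F3 fF) ef; lia.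
have [/forall_inP core_all | /forall_inPn [g gF core_g]] :=
  boolP [forall (h | h \in F), e :&: f \subset h].
  by left; apply: sunflower_card core2 core_all _; apply/set0Pn; exists e.
right; have F_sub := subsetU_of_core_avoided eF fF gF ef core_g.
have cover_ef : cover F = e :|: f.
  apply/eqP; rewrite eqEsubset subUset !bigcup_sup // !andbT.
  by apply/bigcupsP => h; exact: F_sub.
have ef4 : #|e :|: f| = 4 by rewrite cardsU core2 (F3 eF) (F3 fF).
rewrite cover_ef ef4; suff : #|F| <= 'C(#|e :|: f|, 3) by rewrite ef4.
rewrite -cards_draws; apply/subset_leq_card/subsetP => h hF.
by rewrite inE F_sub //= F3.
Qed.

End PairwiseMeetTwo.

Definition meeting (T : finType) (e : {set T}) : {set {set T}} := [set f | f :&: e != set0].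

Section NoSingleMeet.
Variables (T : finType) (F : {set {set T}}) (e : {set T}).
Implicit Types f g h : {set T}.
Hypothesis F3 : {in F, forall f, #|f| = 3}.
Hypothesis F_no1 : {in F &, forall f g, f != g -> #|f :&: g| != 1}.
Hypothesis eF : e \in F.

Lemma meeting_trace_ge2 f : f \in F -> f \in meeting e -> 2 <= #|f :&: e|.
Proof.
move=> fF; rewrite inE -card_gt0.
have [-> | fe] := eqVneq f e; first by rewrite setIid (F3 eF).
by have := F_no1 fF eF fe; lia.
Qed.

Lemma meeting_meet2 : {in F :&: meeting e &, forall f g, f != g -> 2 <= #|f :&: g|}.
Proof.
move=> f g /setIP [fF fe] /setIP [gF ge] fg.
have : 0 < #|f :&: g|.
  apply: (@setI_gt0_of_traces _ e); rewrite (F3 eF).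
  by have := meeting_trace_ge2 fF fe; have := meeting_trace_ge2 gF ge; lia.
by have := F_no1 fF gF fg; lia.
Qed.

Lemma cover_meeting_disjoint : cover (F :&: meeting e) :&: cover (F :\: meeting e) = set0.
Proof.
apply/setP => x; rewrite !inE; apply/negP.
case/andP => /bigcupP [f /setIP [fF fe] xf] /bigcupP [h /setDP [hF he] xh].
have he0 : h :&: e = set0 by apply/eqP; move: he; rewrite inE negbK.
have hf : h != f by apply: contraNneq he => ->.
have hf_pos : 0 < #|h :&: f| by rewrite card_gt0; apply/set0Pn; exists x; rewrite inE xh.
have : #|h :&: f| <= #|f :\: e|.
  apply/subset_leq_card/subsetP => y /setIP [yh yf]; rewrite inE yf andbT.
  apply/negP => ye; have : y \in h :&: e by rewrite inE yh ye.
  by rewrite he0 inE.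
rewrite cardsD (F3 fF).
by have := meeting_trace_ge2 fF fe; have := F_no1 hF fF hf; lia.
Qed.

End NoSingleMeet.

Lemma no_single_meet_card (T : finType) (F : {set {set T}}) :
  {in F, forall f : {set T}, #|f| = 3} ->
  {in F &, forall f g : {set T}, f != g -> #|f :&: g| != 1} -> #|F| <= #|cover F|.
Proof.
move=> F3 F_no1; have [k] := ubnP #|F|; elim: k F F3 F_no1 => // k IH F F3 F_no1 Fk.
have [-> | [e eF]] := set_0Vmem F; first by rewrite cards0.
have e_star : e \in F :&: meeting e by rewrite !inE eF setIid -card_gt0 F3.
have star_card : #|F :&: meeting e| <= #|cover (F :&: meeting e)|.
  have star3 : {in F :&: meeting e, forall f : {set T}, #|f| = 3} by move=> f /setIP [/F3].
  have [|[]//] := meet2_family_card star3 (meeting_meet2 F3 F_no1 eF).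
  exact: leq_trans (leq_addr 2 _).
have rest_card : #|F :\: meeting e| <= #|cover (F :\: meeting e)|.
  apply: IH.
  - by move=> f /setDP [/F3].
  - by move=> f g /setDP [fF _] /setDP [gF _]; exact: F_no1.
  - have := cardsID (meeting e) F; have : 0 < #|F :&: meeting e|.
      by rewrite card_gt0; apply/set0Pn; exists e.
    lia.
have cover_split : cover F = cover (F :&: meeting e) :|: cover (F :\: meeting e).
  by rewrite /cover -bigcup_setU setID.
rewrite -(cardsID (meeting e) F) cover_split cardsU cover_meeting_disjoint //.
by rewrite cards0 subn0 leq_add.
Qed.

Section Triples.
Variable T : finType.
Implicit Types (e : {set T}) (a b c u v : T).

Lemma card3_eq_set3_2 e u v : #|e| = 3 -> u \in e -> v \in e -> u != v ->
  exists m, e = [set u; m; v].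
Proof.
move=> e3 ue ve uv.
have /cards1P [m em] : #|e :\ u :\ v| == 1.
  by move: e3; rewrite (cardsD1 u) (cardsD1 v (e :\ u)) ue !inE eq_sym uv ve; lia.
exists m; apply/setP => x; rewrite !inE.
have [-> | xu] := eqVneq x u; first by rewrite ue.
have [-> | xv] := eqVneq x v; first by rewrite ve orbT.
by rewrite orbF -(in_set1 x m) -em !inE xu xv.
Qed.

Lemma card3_eq_set3_1 e u : #|e| = 3 -> u \in e -> exists a b, e = [set u; a; b].
Proof.
move=> e3 ue; have : 0 < #|e :\ u| by move: e3; rewrite (cardsD1 u) ue; lia.
rewrite card_gt0 => /set0Pn [v]; rewrite !inE => /andP [vu ve].
have uv : u != v by rewrite eq_sym.
by have [m ->] := card3_eq_set3_2 e3 ue ve uv; exists m, v.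
Qed.

Lemma card3_eq_set3 e : #|e| = 3 -> exists a b c, e = [set a; b; c].
Proof.
move=> e3; have /set0Pn [u ue] : e != set0 by rewrite -card_gt0 e3.
by have [a [b ->]] := card3_eq_set3_1 e3 ue; exists u, a, b.
Qed.

Lemma set3_rotl a b c : [set a; b; c] = [set b; c; a].
Proof. by apply/setP => x; rewrite !inE; case: (x == a); rewrite ?orbT ?orbF. Qed.

End Triples.

Lemma uniq_of_card_set (T : finType) (s : seq T) (X : {set T}) :
  X =i s -> #|X| = size s -> uniq s.
Proof. by move=> Xs cX; apply/card_uniqP; rewrite -cX; apply: eq_card => x; rewrite Xs. Qed.

Lemma contains_of_seq n k (H : hgraph n) (F : hgraph k.+1) (s : seq 'I_n) (x0 : 'I_n) :
  uniq s -> size s = k.+1 ->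
  (forall e, e \in F -> [set nth x0 s (val i) | i in e] \in H) -> contains H F.
Proof.
move=> us ss HF; exists (fun i : 'I_k.+1 => nth x0 s i); split => //.
by move=> i j /eqP; rewrite nth_uniq ?ss // => /eqP /val_inj.
Qed.

Lemma imset_nth_tri (T : finType) k (s : seq T) x0 a b c : a <= k -> b <= k -> c <= k ->
  [set nth x0 s (val i) | i in tri k a b c] = [set nth x0 s a; nth x0 s b; nth x0 s c].
Proof. by move=> ak bk ck; rewrite /tri !imsetU !imset_set1 /= !inordK. Qed.

Section Configurations.
Variables (n : nat) (H : hgraph n).
Hypothesis H3 : uniform3 H.
Variables e1 e2 e3 : {set 'I_n}.
Hypotheses (e1H : e1 \in H) (e2H : e2 \in H) (e3H : e3 \in H).
Hypothesis e12 : #|e1 :&: e2| = 1.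

Lemma contains_Ppath_of : #|e2 :&: e3| = 1 -> e1 :&: e3 = set0 -> contains H Ppath.
Proof.
move=> e23 e13.
have cover7 : #|e1 :|: e2 :|: e3| = 7.
  by rewrite cardsU (cardsU e1) setIUl e13 set0U (H3 e1H) (H3 e2H) (H3 e3H) e12 e23.
have /cards1P [c ec] : #|e1 :&: e2| == 1 by rewrite e12.
have /cards1P [d ed] : #|e2 :&: e3| == 1 by rewrite e23.
have /setIP [ce1 ce2] : c \in e1 :&: e2 by rewrite ec set11.
have /setIP [de2 de3] : d \in e2 :&: e3 by rewrite ed set11.
have cd : c != d.
  apply: contraTneq ce1 => ->; apply/negP => de1.
  have : d \in e1 :&: e3 by rewrite inE de1 de3.
  by rewrite e13 inE.
have [a [b E1]] := card3_eq_set3_1 (H3 e1H) ce1.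
have [m E2] := card3_eq_set3_2 (H3 e2H) ce2 de2 cd.
have [f [g E3]] := card3_eq_set3_1 (H3 e3H) de3.
have us : uniq [:: a; b; c; m; d; f; g].
  apply: (uniq_of_card_set (X := e1 :|: e2 :|: e3)) => // x.
  rewrite E1 E2 E3 !inE.
  by case: (x == a); case: (x == b); case: (x == c); case: (x == m); case: (x == d);
    case: (x == f); case: (x == g).
apply: (contains_of_seq (x0 := a) us) => // e.
rewrite !inE => /orP [/orP [/eqP -> | /eqP ->] | /eqP ->]; rewrite imset_nth_tri //=.
- by rewrite -set3_rotl -E1.
- by rewrite -E2.
- by rewrite -E3.
Qed.

Lemma contains_Ctri_of : #|e2 :&: e3| = 1 -> #|e3 :&: e1| = 1 ->
  e1 :&: e2 :&: e3 = set0 -> contains H Ctri.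
Proof.
move=> e23 e31 e123.
have cover6 : #|e1 :|: e2 :|: e3| = 6.
  rewrite cardsU (cardsU e1) setIUl cardsU setIACA setIid e123 cards0 (setIC e1 e3) e31.
  by rewrite (H3 e1H) (H3 e2H) (H3 e3H) e12 e23.
have /cards1P [x2 E12] : #|e1 :&: e2| == 1 by rewrite e12.
have /cards1P [x3 E23] : #|e2 :&: e3| == 1 by rewrite e23.
have /cards1P [x1 E31] : #|e3 :&: e1| == 1 by rewrite e31.
have /setIP [x21 x22] : x2 \in e1 :&: e2 by rewrite E12 set11.
have /setIP [x32 x33] : x3 \in e2 :&: e3 by rewrite E23 set11.
have /setIP [x13 x11] : x1 \in e3 :&: e1 by rewrite E31 set11.
have not_in3 x : x \in e1 -> x \in e2 -> x \in e3 -> False.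
  move=> xe1 xe2 xe3; have : x \in e1 :&: e2 :&: e3 by rewrite !inE xe1 xe2 xe3.
  by rewrite e123 inE.
have d12 : x1 != x2 by apply/eqP => E; apply: (not_in3 x1) => //; rewrite E.
have d23 : x2 != x3 by apply/eqP => E; apply: (not_in3 x2) => //; rewrite E.
have d31 : x3 != x1 by apply/eqP => E; apply: (not_in3 x3) => //; rewrite E.
have [y3 E1] := card3_eq_set3_2 (H3 e1H) x11 x21 d12.
have [y1 E2] := card3_eq_set3_2 (H3 e2H) x22 x32 d23.
have [y2 E3] := card3_eq_set3_2 (H3 e3H) x33 x13 d31.
have us : uniq [:: x1; x2; x3; y1; y2; y3].
  apply: (uniq_of_card_set (X := e1 :|: e2 :|: e3)) => // x.
  rewrite E1 E2 E3 !inE.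
  by case: (x == x1); case: (x == x2); case: (x == x3); case: (x == y1); case: (x == y2);
    case: (x == y3).
apply: (contains_of_seq (x0 := x1) us) => // e.
rewrite !inE => /orP [/orP [/eqP -> | /eqP ->] | /eqP ->]; rewrite imset_nth_tri //=.
- by rewrite -E1.
- by rewrite -E2.
- by rewrite -E3.
Qed.

Lemma contains_P2K3_of : e1 :&: e3 = set0 -> e2 :&: e3 = set0 -> contains H P2K3.
Proof.
move=> e13 e23.
have cover8 : #|e1 :|: e2 :|: e3| = 8.
  by rewrite cardsU (cardsU e1) setIUl e13 e23 setU0 cards0 (H3 e1H) (H3 e2H) (H3 e3H) e12.
have /cards1P [c ec] : #|e1 :&: e2| == 1 by rewrite e12.
have /setIP [ce1 ce2] : c \in e1 :&: e2 by rewrite ec set11.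
have [a [b E1]] := card3_eq_set3_1 (H3 e1H) ce1.
have [m [d E2]] := card3_eq_set3_1 (H3 e2H) ce2.
have [x [y [z E3]]] := card3_eq_set3 (H3 e3H).
have us : uniq [:: a; b; c; m; d; x; y; z].
  apply: (uniq_of_card_set (X := e1 :|: e2 :|: e3)) => // w.
  rewrite E1 E2 E3 !inE.
  by case: (w == a); case: (w == b); case: (w == c); case: (w == m); case: (w == d);
    case: (w == x); case: (w == y); case: (w == z).
apply: (contains_of_seq (x0 := a) us) => // e.
rewrite !inE => /orP [/orP [/eqP -> | /eqP ->] | /eqP ->]; rewrite imset_nth_tri //=.
- by rewrite -set3_rotl -E1.
- by rewrite -E2.
- by rewrite -E3.
Qed.

End Configurations.

Section ForbiddenFree.
Variables (n : nat) (H : hgraph n).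
Hypothesis H3 : uniform3 H.
Hypothesis noP : ~ contains H Ppath.
Hypothesis noC : ~ contains H Ctri.
Hypothesis noK : ~ contains H P2K3.
Implicit Types X Y Z e f : {set 'I_n}.

Lemma single_meet_hits e f Z : e \in H -> f \in H -> Z \in H -> #|e :&: f| = 1 ->
  0 < #|e :&: Z| \/ 0 < #|f :&: Z|.
Proof.
move=> eH fH ZH ef; have [/cards0_eq eZ | ] := posnP #|e :&: Z|; last by left.
have [/cards0_eq fZ | ] := posnP #|f :&: Z|; last by right.
by case: noK; apply: (contains_P2K3_of H3 eH fH ZH ef eZ fZ).
Qed.

Lemma double_trace_of_single X Y e : X \in H -> Y \in H -> X :&: Y = set0 -> e \in H ->
  #|e :&: X| = 1 -> 2 <= #|e :&: Y|.
Proof.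
move=> XH YH XY eH eX.
have [/cards0_eq eY | Y_pos] := posnP #|e :&: Y|.
  by case: noK; apply: (contains_P2K3_of H3 eH XH YH eX eY XY).
rewrite ltnNge; apply/negP => Y_small; case: noP.
apply: (contains_Ppath_of H3 XH eH YH) => //; first by rewrite setIC.
lia.
Qed.

Lemma edge_trichotomy X Y e : X \in H -> Y \in H -> X :&: Y = set0 -> e \in H ->
  [\/ 2 <= #|e :&: X|, 2 <= #|e :&: Y| | e :&: X = set0 /\ e :&: Y = set0].
Proof.
move=> XH YH XY eH; have YX : Y :&: X = set0 by rewrite setIC.
have [eX_big | ] := leqP 2 #|e :&: X|; first by constructor 1.
have [/cards0_eq eX _ | X_pos X_small] := posnP #|e :&: X|; last first.
  by constructor 2; apply: double_trace_of_single XH YH XY eH _; lia.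
have [eY_big | ] := leqP 2 #|e :&: Y|; first by constructor 2.
have [/cards0_eq eY _ | Y_pos Y_small] := posnP #|e :&: Y|; first by constructor 3.
have := double_trace_of_single YH XH YX eH; rewrite eX cards0; lia.
Qed.

Lemma double_traces_meet2 X Y e f : X \in H -> Y \in H -> X :&: Y = set0 ->
  e \in H -> f \in H -> 2 <= #|e :&: X| -> 2 <= #|f :&: X| -> e != f -> 2 <= #|e :&: f|.
Proof.
move=> XH YH XY eH fH eX fX ef.
have e3 := H3 eH; have f3 := H3 fH.
have efX : 0 < #|e :&: f :&: X|.
  rewrite -(setIid X) setIACA; apply: (@setI_gt0_of_traces _ X).
  by rewrite -!setIA !setIid (H3 XH); lia.
rewrite ltnNge; apply/negP => ef_small.
have ef1 : #|e :&: f| = 1.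
  by have := subset_leq_card (subsetIl (e :&: f) X); lia.
have fe1 : #|f :&: e| = 1 by rewrite setIC.
have := cardsI_disjoint2 e XY; have := cardsI_disjoint2 f XY; rewrite e3 f3 => fXY eXY.
have [/cards0_eq eY | eY_pos] := posnP #|e :&: Y|;
  have [/cards0_eq fY | fY_pos] := posnP #|f :&: Y|.
- by case: noK; apply: (contains_P2K3_of H3 eH fH YH).
- by case: noP; apply: (contains_Ppath_of H3 eH fH YH) => //; lia.
- by case: noP; apply: (contains_Ppath_of H3 fH eH YH) => //; lia.
- case: noC; apply: (contains_Ctri_of H3 eH fH YH) => //; first lia.
    by rewrite setIC; lia.
  (* the common vertex of e and f lies in X, hence not in Y *)
  by apply/cards0_eq; have := cardsI_disjoint2 (e :&: f) XY; lia.
Qed.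

Lemma trace_ne1_of_three_disjoint X Y Z e : X \in H -> Y \in H -> Z \in H ->
  X :&: Y = set0 -> X :&: Z = set0 -> Y :&: Z = set0 -> e \in H -> #|e :&: X| != 1.
Proof.
move=> XH YH ZH XY XZ YZ eH; apply/eqP => eX.
have := double_trace_of_single XH YH XY eH eX.
have := double_trace_of_single XH ZH XZ eH eX.
by have := cardsI_disjoint3 e XY XZ YZ; rewrite (H3 eH); lia.
Qed.

Lemma no_single_meet_of_three_disjoint X Y Z e f : X \in H -> Y \in H -> Z \in H ->
  X :&: Y = set0 -> X :&: Z = set0 -> Y :&: Z = set0 -> e \in H -> f \in H ->
  #|e :&: f| != 1.
Proof.
move=> XH YH ZH XY XZ YZ eH fH; apply/eqP => ef.
have YX : Y :&: X = set0 by rewrite setIC.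
have ZX : Z :&: X = set0 by rewrite setIC.
have ZY : Z :&: Y = set0 by rewrite setIC.
have trace_ne1 g : g \in H ->
    [/\ #|g :&: X| != 1, #|g :&: Y| != 1 & #|g :&: Z| != 1].
  move=> gH; split.
  - exact: (trace_ne1_of_three_disjoint XH YH ZH).
  - exact: (trace_ne1_of_three_disjoint YH XH ZH).
  - exact: (trace_ne1_of_three_disjoint ZH XH YH).
(* Each of X, Y, Z meets e or f, yet each of e, f meets at most one of them,
   since a nonempty trace has at least two vertices. *)
have [eX1 eY1 eZ1] := trace_ne1 e eH; have [fX1 fY1 fZ1] := trace_ne1 f fH.
have := cardsI_disjoint3 e XY XZ YZ; have := cardsI_disjoint3 f XY XZ YZ.
have := single_meet_hits eH fH XH ef; have := single_meet_hits eH fH YH ef.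
have := single_meet_hits eH fH ZH ef; rewrite (H3 eH) (H3 fH); lia.
Qed.

Lemma card_double_trace_le X Y : 6 <= n -> X \in H -> Y \in H -> X :&: Y = set0 ->
  #|[set e in H | 2 <= #|e :&: X|]| <= n - 2.
Proof.
move=> n6 XH YH XY; set F := [set e in H | _].
have F3 : {in F, forall e, #|e| = 3} by move=> e; rewrite inE => /andP [/H3].
have F_meet2 : {in F &, forall e f, e != f -> 2 <= #|e :&: f|}.
  move=> e f; rewrite !inE => /andP [eH eX] /andP [fH fX].
  exact: (double_traces_meet2 XH YH XY).
have cover_le : #|cover F| <= n by have := max_card (mem (cover F)); rewrite card_ord.
by case: (meet2_family_card F3 F_meet2) => [|[]]; lia.
Qed.

Lemma card_le_of_disjoint_edges A B : 6 <= n -> A \in H -> B \in H -> A :&: B = set0 ->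
  #|H| <= 2 * n - 4.
Proof.
move=> n6 AH BH AB; have BA : B :&: A = set0 by rewrite setIC.
have [/exists_inP [D DH /andP [/eqP DA /eqP DB]] | no_D] :=
  boolP [exists D in H, (D :&: A == set0) && (D :&: B == set0)].
  have AD : A :&: D = set0 by rewrite setIC.
  have BD : B :&: D = set0 by rewrite setIC.
  have : #|H| <= #|cover H|.
    apply: no_single_meet_card; first by move=> e /H3.
    by move=> e f eH fH _; apply: (no_single_meet_of_three_disjoint AH BH DH).
  have : #|cover H| <= n by have := max_card (mem (cover H)); rewrite card_ord.
  lia.
have H_split : H \subset [set e in H | 2 <= #|e :&: A|] :|: [set e in H | 2 <= #|e :&: B|].
  apply/subsetP => e eH; rewrite !inE eH /=.
  have [-> | -> | [eA eB]] := edge_trichotomy AH BH AB eH; rewrite ?orbT //.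
  by move/exists_inPn: no_D => /(_ e eH); rewrite eA eB eqxx.
have := subset_leq_card H_split; rewrite cardsU.
have := card_double_trace_le n6 AH BH AB; have := card_double_trace_le n6 BH AH BA; lia.
Qed.

End ForbiddenFree.

Definition has_linear_triple n (H : hgraph n) : Prop :=
  exists e1 e2 e3, [/\ e1 \in H, e2 \in H & e3 \in H] /\
    [/\ #|e1 :&: e2| <= 1, #|e2 :&: e3| <= 1 & #|e1 :&: e3| <= 1].

Lemma has_linear_triple_contains n k (H : hgraph n) (F : hgraph k) :
  contains H F -> has_linear_triple F -> has_linear_triple H.
Proof.
move=> [g [g_inj gF]] [t1 [t2 [t3 [[t1F t2F t3F] [t12 t23 t13]]]]].
have cardI (s t : {set 'I_k}) : #|g @: s :&: g @: t| = #|s :&: t|.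
  by rewrite -imsetI ?card_imset // => x y _ _; apply: g_inj.
by exists (g @: t1), (g @: t2), (g @: t3); split; split; rewrite ?gF ?cardI.
Qed.

Lemma eq_inord k (x : 'I_k.+1) i : i <= k -> (x == inord i) = (val x == i).
Proof. by move=> ik; rewrite -(inj_eq val_inj) /= inordK. Qed.

(* Bounds the intersection of two concrete [tri] edges whose only common vertex is [v]. *)
Ltac tri_setI_le1 v :=
  apply: (@leq_trans #|[set (inord v : 'I__)]|); last (by rewrite cards1);
  apply/subset_leq_card/subsetP;
  case => [[|[|[|[|[|[|[|[|m]]]]]]]] lt_m]; rewrite !inE !eq_inord //=.

Lemma Ppath_linear_triple : has_linear_triple Ppath.
Proof.
exists (tri 6 0 1 2), (tri 6 2 3 4), (tri 6 4 5 6); split.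
  by split; rewrite !inE eqxx ?orbT.
by split; [tri_setI_le1 2 | tri_setI_le1 4 | tri_setI_le1 0].
Qed.

Lemma Ctri_linear_triple : has_linear_triple Ctri.
Proof.
exists (tri 5 0 5 1), (tri 5 1 3 2), (tri 5 2 4 0); split.
  by split; rewrite !inE eqxx ?orbT.
by split; [tri_setI_le1 1 | tri_setI_le1 2 | tri_setI_le1 0].
Qed.

Lemma P2K3_linear_triple : has_linear_triple P2K3.
Proof.
exists (tri 7 0 1 2), (tri 7 2 3 4), (tri 7 5 6 7); split.
  by split; rewrite !inE eqxx ?orbT.
by split; [tri_setI_le1 2 | tri_setI_le1 0 | tri_setI_le1 0].
Qed.

Section PairCover.
Variables (n : nat) (H : hgraph n) (p q : {set 'I_n}).
Hypotheses (p2 : #|p| = 2) (q2 : #|q| = 2).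
Hypothesis pq_cover : {in H, forall e : {set 'I_n}, p \subset e \/ q \subset e}.

Lemma pair_cover_alternates (e f : {set 'I_n}) : e \in H -> f \in H -> #|e :&: f| <= 1 ->
  (p \subset e) != (p \subset f).
Proof.
have meet2 (r : {set 'I_n}) : #|r| = 2 -> r \subset e -> r \subset f -> 2 <= #|e :&: f|.
  by move=> r2 re rf; rewrite -r2; apply: subset_leq_card; rewrite subsetI re rf.
move=> eH fH ef.
have [pe | pe] := boolP (p \subset e); have [pf | pf] := boolP (p \subset f) => //.
  by have := meet2 p p2 pe pf; lia.
have [|qe] := pq_cover eH; first by rewrite (negbTE pe).
have [|qf] := pq_cover fH; first by rewrite (negbTE pf).
by have := meet2 q q2 qe qf; lia.
Qed.

Lemma pair_cover_no_linear_triple : ~ has_linear_triple H.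
Proof.
move=> [e1 [e2 [e3 [[e1H e2H e3H] [e12 e23 e13]]]]].
have := pair_cover_alternates e1H e2H e12; have := pair_cover_alternates e2H e3H e23.
have := pair_cover_alternates e1H e3H e13.
by case: (p \subset e1); case: (p \subset e2); case: (p \subset e3).
Qed.

End PairCover.

Definition book n (u w : 'I_n) : hgraph n := [set [set u; w; x] | x in ~: [set u; w]].

Section Book.
Variables (n : nat) (u w : 'I_n).
Hypothesis uw : u != w.

Lemma book_edge e : e \in book u w -> #|e| = 3 /\ [set u; w] \subset e.
Proof.
case/imsetP => x; rewrite !inE negb_or => /andP [xu xw] ->; split.
  by rewrite setUC cardsU1 !inE negb_or xu xw cards2 uw.
by apply/subsetP => y; rewrite !inE => ->.
Qed.

Lemma card_book : #|book u w| = n - 2.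
Proof.
rewrite card_in_imset; first by rewrite cardsCs setCK cards2 uw card_ord.
move=> x y; rewrite !inE !negb_or => /andP [xu xw] /andP [yu yw] xy.
have : x \in [set u; w; y] by rewrite -xy !inE eqxx orbT.
by rewrite !inE (negbTE xu) (negbTE xw) => /eqP.
Qed.

End Book.

Lemma two_books_extremal n : 6 <= n -> exists H : hgraph n, admissible H /\ #|H| = 2 * n - 4.
Proof.
move=> n6; pose v k : 'I_n := widen_ord n6 (inord k : 'I_6).
have v_eq i j : i <= 5 -> j <= 5 -> (v i == v j) = (i == j).
  by move=> i5 j5; rewrite -(inj_eq val_inj) /= !inordK.
have v01 : v 0 != v 1 by rewrite v_eq.
have v34 : v 3 != v 4 by rewrite v_eq.
exists (book (v 0) (v 1) :|: book (v 3) (v 4)).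
have pq_cover : {in book (v 0) (v 1) :|: book (v 3) (v 4), forall e : {set 'I_n},
    [set v 0; v 1] \subset e \/ [set v 3; v 4] \subset e}.
  by move=> e /setUP [/(book_edge v01) [_ ->] | /(book_edge v34) [_ ->]]; [left | right].
have p2 : #|[set v 0; v 1]| = 2 by rewrite cards2 v01.
have q2 : #|[set v 3; v 4]| = 2 by rewrite cards2 v34.
have pq : [set v 0; v 1] :&: [set v 3; v 4] = set0.
  by apply/setP => x; rewrite !inE; apply/negP => /andP [/orP [/eqP -> | /eqP ->]]; rewrite !v_eq.
have books_disjoint : book (v 0) (v 1) :&: book (v 3) (v 4) = set0.
  apply/setP => e; rewrite !inE; apply/negP.
  case/andP => /(book_edge v01) [_ pe] /(book_edge v34) [e3 qe].
  have : [set v 0; v 1] :|: [set v 3; v 4] \subset e by rewrite subUset pe qe.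
  by move/subset_leq_card; rewrite cardsU pq cards0 p2 q2 e3.
have no_linear := pair_cover_no_linear_triple p2 q2 pq_cover.
split; last by rewrite cardsU books_disjoint cards0 !card_book //; lia.
split.
- by move=> e /setUP [/(book_edge v01) [] | /(book_edge v34) []].
- exists (widen_ord n6); split; first by move=> i j /(congr1 val) /= /val_inj.
  move=> e; rewrite !inE => /orP [] /eqP ->; rewrite /tri !imsetU !imset_set1; apply/orP.
    by left; apply/imsetP; exists (v 2); rewrite // !inE !v_eq.
  by right; apply/imsetP; exists (v 5); rewrite // !inE !v_eq.
- by move/has_linear_triple_contains/(_ Ppath_linear_triple); exact: no_linear.
- by move/has_linear_triple_contains/(_ Ctri_linear_triple); exact: no_linear.
- by move/has_linear_triple_contains/(_ P2K3_linear_triple); exact: no_linear.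
Qed.

Lemma Mmatch_edges_disjoint : tri 5 0 1 2 :&: tri 5 3 4 5 = set0.
Proof. by apply/setP => x; rewrite !inE !eq_inord //; case: x => [[|[|[|[|[|[|m]]]]]] lt_m]. Qed.

Theorem mainTheorem7 (n : nat) : 6 <= n ->
  (forall H : hgraph n, admissible H -> #|H| <= 2 * n - 4) /\
  (exists H : hgraph n, admissible H /\ #|H| = 2 * n - 4).
Proof.
move=> n6; split; last exact: two_books_extremal.
move=> H [H3 [g [g_inj gM]] noP noC noK].
apply: (card_le_of_disjoint_edges H3 noP noC noK n6 (A := g @: tri 5 0 1 2)
                                                  (B := g @: tri 5 3 4 5)).
- by apply: gM; rewrite !inE eqxx.
- by apply: gM; rewrite !inE eqxx orbT.
- by rewrite -imsetI ?Mmatch_edges_disjoint ?imset0 // => x y _ _; apply: g_inj.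
Qed.
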